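(* Let $r\geq 2$ be an integer and let $b$ be a real number with $b\leq (r-1)^{r-1}$. Then every coefficient of the power series expansion of $\dfrac{1}{1-rt+bt^r}$ in $t$ around $t=0$ is strictly positive. *)

From HB Require Import structures.
From mathcomp Require Import all_boot all_order all_algebra.
Set Implicit Arguments. Unset Strict Implicit. Unset Printing Implicit Defensive.
Import Order.TTheory GRing.Theory Num.Theory.
Local Open Scope ring_scope.

(* Coefficients of the polynomial 1 - r t + b t^r (r >= 2, so the three
   monomials have distinct degrees 0, 1, r). *)
Definition den_coef (R : realFieldType) (r : nat) (b : R) (k : nat) : R :=
  if k == 0%N then 1
  else if k == 1%N then - (r%:R)
  else if k == r then b
  else 0.

(* c is the formal power series inverse of a: (sum a_k t^k)(sum c_k t^k) = 1,
   i.e. the Cauchy product of a and c is 1. *)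
Definition is_inv_series (R : realFieldType) (a c : nat -> R) : Prop :=
  forall n : nat, \sum_(i < n.+1) a i * c (n - i)%N = (n == 0%N)%:R.

From HB Require Import structures.
From mathcomp Require Import all_boot all_order all_algebra.
Import Order.TTheory GRing.Theory Num.Theory.
Local Open Scope ring_scope.

Set Implicit Arguments.
Unset Strict Implicit.

(* With q = r - 1 the coefficients grow at least geometrically, c_(n+1) >= q c_n.
   Indeed the recurrence c_(n+1) = (q + 1) c_n - b c_(n+1-r) gives
   c_(n+1) - q c_n = c_n - b c_(n+1-r), and by induction
   b c_(n+1-r) <= q^(r-1) c_(n+1-r) <= c_n.  Positivity follows from c_0 = 1. *)

Lemma expr_mul_le_of_growth (R : numDomainType) (q : R) (c : nat -> R) (m : nat) :
  0 <= q -> (forall k, (k < m)%N -> q * c k <= c k.+1) ->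
  forall j, (j <= m)%N -> q ^+ j * c (m - j)%N <= c m.
Proof.
move=> q_ge0 grow; elim=> [|j IHj] ltjm; first by rewrite expr0 mul1r subn0.
have lt_mj : (m - j.+1 < m)%N by rewrite ltn_subrL (leq_trans _ ltjm).
apply: le_trans (IHj (ltnW ltjm)).
rewrite exprS -mulrA mulrCA ler_wpM2l ?exprn_ge0 //.
by rewrite -[in leRHS](subnSK ltjm); apply: grow.
Qed.

Section InverseOfDenominator.

Variables (R : realFieldType) (r : nat) (b : R) (c : nat -> R).
Hypotheses (r_ge2 : (2 <= r)%N) (inv_c : is_inv_series (den_coef r b) c).

Lemma den_coef_mulr k x :
  den_coef r b k * x =
  (if k == 0%N then x else 0) + (if k == 1%N then - r%:R * x else 0)
  + (if k == r then b * x else 0).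
Proof.
rewrite /den_coef; case: (k =P 0%N) => [->|_].
  by rewrite (_ : (0 == r)%N = false) ?mul1r ?addr0 //; case: r r_ge2.
case: (k =P 1%N) => [->|_].
  by rewrite (_ : (1 == r)%N = false) ?add0r ?addr0 //; case: r r_ge2 => [|[]].
by case: (k == r); rewrite ?add0r ?mul0r.
Qed.

Lemma inv_den_coef0 : c 0%N = 1.
Proof. by have := inv_c 0%N; rewrite big_ord1 subn0 /den_coef mul1r. Qed.

Lemma inv_den_coefS n :
  c n.+1 = r%:R * c n - (if (r <= n.+1)%N then b * c (n.+1 - r)%N else 0).
Proof.
have := inv_c n.+1; under eq_bigr => i _ do rewrite den_coef_mulr.
rewrite !big_split -!(big_mkcond (fun i : 'I_n.+2 => _)) /=.
rewrite (big_ord1_eq _ (fun j => c (n.+1 - j)%N)).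
rewrite (big_ord1_eq _ (fun j => - r%:R * c (n.+1 - j)%N)).
rewrite (big_ord1_eq _ (fun j => b * c (n.+1 - j)%N)) /=.
rewrite subn0 subn1 ltnS -addrA => /eqP; rewrite addr_eq0 => /eqP ->.
by rewrite opprD mulNr opprK.
Qed.

Hypothesis b_le : b <= ((r - 1)%N)%:R ^+ (r - 1).

Let q : R := ((r - 1)%N)%:R.

Lemma inv_den_coef_growth m :
  (forall k, (k <= m)%N -> 0 < c k) ->
  (forall k, (k < m)%N -> q * c k <= c k.+1) ->
  q * c m <= c m.+1.
Proof.
move=> c_gt0 grow.
rewrite inv_den_coefS.
have -> : r%:R = q + 1 :> R by rewrite /q natr1 subn1 prednK // ltnW.
rewrite mulrDl mul1r -addrA lerDl subr_ge0.
case: ifP => [le_r_m1|_]; last exact: ltW (c_gt0 _ (leqnn m)).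
have le_r1_m : (r - 1 <= m)%N by rewrite leq_subLR add1n -ltnS.
have <- : (m - (r - 1))%N = (m.+1 - r)%N by rewrite subnBA ?addn1 // ltnW.
apply: le_trans (expr_mul_le_of_growth (ler0n _ _) grow le_r1_m).
by rewrite ler_wpM2r //; apply/ltW/c_gt0/leq_subr.
Qed.

End InverseOfDenominator.

Theorem lemma2 (R : realFieldType) (r : nat) (b : R)
  (hr : (2 <= r)%N) (hb : b <= ((r - 1)%N)%:R ^+ (r - 1))
  (c : nat -> R) (hc : is_inv_series (den_coef r b) c) :
  forall n : nat, 0 < c n.
Proof.
have q_gt0 : 0 < ((r - 1)%N)%:R :> R by rewrite ltr0n subn_gt0.
suff inv : forall n, (forall k, (k <= n)%N -> 0 < c k) /\
    (forall k, (k < n)%N -> ((r - 1)%N)%:R * c k <= c k.+1).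
  by move=> n; apply: (inv n).1.
elim=> [|n [c_gt0 grow]].
  by split=> // k; rewrite leqn0 => /eqP ->; rewrite (inv_den_coef0 hc).
have grow_n := inv_den_coef_growth hr hc hb c_gt0 grow.
split=> k; first rewrite leq_eqVlt => /predU1P[->|/c_gt0 //].
  exact: lt_le_trans (mulr_gt0 q_gt0 (c_gt0 _ (leqnn n))) grow_n.
by rewrite ltnS leq_eqVlt => /predU1P[->|/grow].
Qed.
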